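(* Let $k=\mathbb{R}$ or $k=\mathbb{C}$, let $\mathcal Z\subset k$ be a discrete subring closed under conjugation, $(a_n)_{n\ge1}$ a sequence in $\mathcal Z$ and $x_0\in k$ with $x_n=T_{a_n}\cdots T_{a_1}x_0$ defined and $|x_n|<1$ for all $n\ge0$. Then for each $n$ there exist $p_n,q_n\in\mathcal Z$ with $|q_n|\ge1$ such that $p_n/q_n=T^{-1}_{a_1}\cdots T^{-1}_{a_n}0$ and \[\left|T^{-1}_{a_1}\cdots T^{-1}_{a_n}0-x_0\right|=\frac{1}{|q_n|}\prod_{i=0}^n|x_i|.\]
   Context: For $a\in\mathcal Z$, $T_ax=x^{-1}-a$ and $T_a^{-1}x=(x+a)^{-1}$. Discrete means discrete in the Euclidean topology. *)

From HB Require Import structures.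
From mathcomp Require Import all_boot all_order all_algebra.
From mathcomp Require Import reals complex.
Set Implicit Arguments. Unset Strict Implicit. Unset Printing Implicit Defensive.
Import Order.TTheory GRing.Theory Num.Theory.
Local Open Scope ring_scope.

Definition is_subring (k : numFieldType) (Z : k -> Prop) : Prop :=
  [/\ Z 0, Z 1,
      (forall x y, Z x -> Z y -> Z (x + y)),
      (forall x, Z x -> Z (- x)) &
      (forall x y, Z x -> Z y -> Z (x * y))].

Definition is_discrete (k : numFieldType) (Z : k -> Prop) : Prop :=
  forall z, Z z -> exists2 e : k, 0 < e & forall w, Z w -> `|w - z| < e -> w = z.

Definition conj_closed (k : numFieldType) (conj : k -> k) (Z : k -> Prop) : Prop :=
  forall z, Z z -> Z (conj z).

Definition T (k : numFieldType) (a x : k) : k := x^-1 - a.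
Definition Tinv (k : numFieldType) (a x : k) : k := (x + a)^-1.

(* orbit x_n = T_{a_n} ... T_{a_1} x0 (a indexed from 1; a 0 unused) *)
Fixpoint orbit (k : numFieldType) (a : nat -> k) (x0 : k) (n : nat) : k :=
  match n with
  | 0 => x0
  | m.+1 => T (a m.+1) (orbit a x0 m)
  end.

(* backward composition T^{-1}_{a_m} T^{-1}_{a_{m+1}} ... T^{-1}_{a_n} 0
   (for m > n this is 0); convergent n := back a 1 n *)
Fixpoint back_aux (k : numFieldType) (a : nat -> k) (m len : nat) : k :=
  match len with
  | 0 => 0
  | l.+1 => Tinv (a m) (back_aux a m.+1 l)
  end.
Definition back (k : numFieldType) (a : nat -> k) (m n : nat) : k :=
  back_aux a m (n.+1 - m).

(* every step T^{-1}_{a_m}(y) = (y + a_m)^{-1} in the composition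
   T^{-1}_{a_1}...T^{-1}_{a_n} 0 is defined, i.e. y + a_m != 0 *)
Definition back_defined (k : numFieldType) (a : nat -> k) (n : nat) : Prop :=
  forall m, (1 <= m <= n)%N -> back a m.+1 n + a m != 0.

Definition lemma2p1_stmt (k : numFieldType) (conj : k -> k) : Prop :=
  forall (Z : k -> Prop), is_subring Z -> is_discrete Z -> conj_closed conj Z ->
  forall (a : nat -> k) (x0 : k),
    (forall n, (1 <= n)%N -> Z (a n)) ->
    (* x_n is defined for every n, i.e. x_n != 0 for every n *)
    (forall n, orbit a x0 n != 0) ->
    (forall n, `|orbit a x0 n| < 1) ->
    forall n, exists p q : k,
      [/\ Z p /\ Z q, 1 <= `|q|,
          back_defined a n,
          back a 1 n = p / q &
          `|back a 1 n - x0| = `|q|^-1 * \prod_(i < n.+1) `|orbit a x0 i| ].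

From Pilot Require Import Defs.
From HB Require Import structures.
From mathcomp Require Import all_boot all_order all_algebra.
From mathcomp Require Import reals complex.
From mathcomp Require Import ring lra.
Import Order.TTheory GRing.Theory Num.Theory.
Local Open Scope ring_scope.
Local Open Scope complex_scope.
Set Implicit Arguments. Unset Strict Implicit. Unset Printing Implicit Defensive.

(* The convergent T^{-1}_{a_1}...T^{-1}_{a_n} 0 is a quotient p/q of continuants, and unwinding
   x_{j+1} = 1/x_j - a_{j+1} gives p - q x_0 = ± x_0 x_1 ... x_n.  Since that product has norm < 1
   while a discrete subring has no nonzero element of norm < 1 (its powers would accumulate at 0),
   q cannot vanish, so |q| >= 1 and the error formula follows by dividing by q. *)

Definition powers_vanish (k : numFieldType) : Prop :=
  forall r e : k, 0 <= r -> r < 1 -> 0 < e -> exists n, r ^+ n < e.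

Lemma bernoulli_ineq (R : realDomainType) (h : R) (n : nat) :
  0 <= h -> 1 + n%:R * h <= (1 + h) ^+ n.
Proof.
move=> h0; elim: n => [|n IH]; first by rewrite mul0r addr0 expr0.
rewrite exprS -natr1.
have hn : 0 <= n%:R * h by rewrite mulr_ge0.
have := ler_wpM2l (addr_ge0 ler01 h0) IH; nra.
Qed.

Lemma archi_powers_vanish (F : archiRealFieldType) : powers_vanish F.
Proof.
move=> r e r0 r1 e0.
have [->|rn0] := eqVneq r 0; first by exists 1%N; rewrite expr1.
have rp : 0 < r by rewrite lt0r rn0.
pose h := r^-1 - 1.
have hp : 0 < h by rewrite subr_gt0 invf_gt1.
pose n := Num.Def.archi_bound (e * h)^-1.
have hn : (e * h)^-1 < n%:R by apply: archi_boundP; rewrite invr_ge0 mulr_ge0 ?ltW.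
exists n; rewrite -ltf_pV2 ?posrE ?exprn_gt0 // -exprVn.
have -> : r^-1 = 1 + h by rewrite addrC subrK.
apply: lt_le_trans (bernoulli_ineq n (ltW hp)).
have -> : e^-1 = (e * h)^-1 * h by rewrite invfM mulfVK ?gt_eqF.
nra.
Qed.

Lemma complex_powers_vanish (R : archiRcfType) : powers_vanish R[i].
Proof.
move=> r e r0 r1 e0.
have [r' def_r] : exists r', r = r'%:C by apply/complex_realP; exact: ger0_real.
have [e' def_e] : exists e', e = e'%:C by apply/complex_realP; exact: gtr0_real.
move: r0 r1 e0; rewrite def_r def_e => r0 r1 e0.
have r0' : 0 <= r' by rewrite -lecR.
have r1' : r' < 1 by rewrite -ltcR.
have e0' : 0 < e' by rewrite -ltcR.
have [n hn] := archi_powers_vanish r0' r1' e0'.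
by exists n; rewrite -rmorphXn ltcR.
Qed.

Lemma discrete_subring_small_eq0 (k : numFieldType) (Z : k -> Prop) (z : k) :
  powers_vanish k -> is_subring Z -> is_discrete Z -> Z z -> `|z| < 1 -> z = 0.
Proof.
move=> vanish [Z0 Z1 _ _ ZM] discrete Zz z1.
have [e e0 isolated0] := discrete 0 Z0.
have [m zm] := vanish `|z| e (normr_ge0 _) z1 e0.
have Zzm : Z (z ^+ m) by elim: m {zm} => // m IH; rewrite exprS; apply: ZM.
have zm0 : z ^+ m = 0 by apply: isolated0; rewrite // subr0 normrX.
by move/eqP: zm0; rewrite expf_eq0 => /andP[_ /eqP].
Qed.

Lemma prodr_ord_ilt1 (R : numDomainType) (n : nat) (F : 'I_n.+1 -> R) :
  (forall i, 0 <= F i < 1) -> \prod_i F i < 1.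
Proof.
elim: n F => [|n IH] F F01; first by rewrite big_ord1; case/andP: (F01 ord0).
rewrite big_ord_recr /=; case/andP: (F01 ord_max) => F0 F1.
apply: mulr_ilt1 => //; last exact: IH.
by apply: prodr_ge0 => i _; case/andP: (F01 (widen_ord (leqnSn _) i)).
Qed.

Section Convergents.

Variables (k : numFieldType) (a : nat -> k).

(* [convergent m l] is the pair (p, q) of continuants with
   T^{-1}_{a_m} ... T^{-1}_{a_{m+l-1}} 0 = p / q. *)
Fixpoint convergent (m l : nat) : k * k :=
  if l is l.+1 then
    ((convergent m.+1 l).2, a m * (convergent m.+1 l).2 + (convergent m.+1 l).1)
  else (0, 1).

Lemma convergent_neq0 m l : (convergent m l).1 != 0 \/ (convergent m l).2 != 0.
Proof.
elim: l m => [|l IH] m /=; first by right; exact: oner_neq0.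
have [q0|] := eqVneq (convergent m.+1 l).2 0; last by left.
by right; rewrite q0 mulr0 add0r; case: (IH m.+1); rewrite // q0 eqxx.
Qed.

Lemma convergent_ratioD m l : (convergent m.+1 l).2 != 0 ->
  (convergent m.+1 l).1 / (convergent m.+1 l).2 + a m
  = (convergent m l.+1).2 / (convergent m.+1 l).2.
Proof. by move=> q0; rewrite /= mulrDl mulfK // addrC. Qed.

Variable Z : k -> Prop.
Hypothesis subringZ : is_subring Z.
Hypothesis Za : forall n, (1 <= n)%N -> Z (a n).

Lemma convergent_in m l : (1 <= m)%N -> Z (convergent m l).1 /\ Z (convergent m l).2.
Proof.
case: subringZ => Z0 Z1 ZD _ ZM.
elim: l m => [|l IH] m m1 //=.
have [Zp Zq] := IH m.+1 (leqW m1).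
by split=> //; apply: ZD => //; apply: ZM => //; exact: Za.
Qed.

Variable x0 : k.
Local Notation x := (Defs.orbit a x0).
Hypothesis x_neq0 : forall n, x n != 0.
Hypothesis x_lt1 : forall n, `|x n| < 1.
Hypothesis small_eq0 : forall z, Z z -> `|z| < 1 -> z = 0.

Lemma convergent_error_step j l :
  (convergent j.+1 l.+1).1 - (convergent j.+1 l.+1).2 * x j
  = - x j * ((convergent j.+2 l).1 - (convergent j.+2 l).2 * x j.+1).
Proof.
have ha : a j.+1 = (x j)^-1 - x j.+1 by rewrite /= /T opprB addrC subrK.
by rewrite [LHS]/= ha; field; exact: x_neq0.
Qed.

Lemma norm_convergent_error j l :
  `|(convergent j.+1 l).1 - (convergent j.+1 l).2 * x j| = \prod_(i < l.+1) `|x (j + i)|.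
Proof.
elim: l j => [|l IH] j; first by rewrite big_ord1 addn0 /= mul1r sub0r normrN.
rewrite convergent_error_step normrM normrN IH [RHS]big_ord_recl addn0.
by congr (_ * _); apply: eq_bigr => i _; rewrite addSnnS.
Qed.

Lemma denominator_ge1 j l : 1 <= `|(convergent j.+1 l).2|.
Proof.
have [Zp Zq] := @convergent_in j.+1 l isT.
have prod_lt1 : \prod_(i < l.+1) `|x (j + i)| < 1.
  by apply: prodr_ord_ilt1 => i; rewrite normr_ge0 x_lt1.
have q0 : (convergent j.+1 l).2 != 0.
  apply/eqP => q0; have err := norm_convergent_error j l.
  rewrite q0 mul0r subr0 in err.
  have p0 : (convergent j.+1 l).1 = 0 by apply: small_eq0; rewrite // err.
  by case: (convergent_neq0 j.+1 l); rewrite ?p0 ?q0 eqxx.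
by rewrite real_leNgt ?real1 ?normr_real //; apply/negP => /(small_eq0 Zq); exact/eqP.
Qed.

Lemma denominator_neq0 j l : (convergent j.+1 l).2 != 0.
Proof. by rewrite -normr_gt0 (lt_le_trans ltr01) ?denominator_ge1. Qed.

Lemma back_aux_convergent m l :
  (1 <= m)%N -> back_aux a m l = (convergent m l).1 / (convergent m l).2.
Proof.
elim: l m => [|l IH] [|m] // _; first by rewrite mul0r.
by rewrite /= /Tinv IH // convergent_ratioD ?denominator_neq0 // invf_div.
Qed.

Lemma convergent_approximation n : exists p q : k,
  [/\ Z p /\ Z q, 1 <= `|q|,
      back_defined a n,
      back a 1 n = p / q &
      `|back a 1 n - x0| = `|q|^-1 * \prod_(i < n.+1) `|x i| ].
Proof.
exists (convergent 1 n).1, (convergent 1 n).2.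
have back1 : back a 1 n = (convergent 1 n).1 / (convergent 1 n).2.
  by rewrite /back subSS subn0 back_aux_convergent.
have q0 := denominator_neq0 0 n.
split; [exact: convergent_in | exact: denominator_ge1 | | exact: back1 |].
- case=> [|m] // /andP[_ mn].
  rewrite /back subSS back_aux_convergent // convergent_ratioD ?denominator_neq0 //.
  by rewrite mulf_neq0 ?invr_eq0 ?denominator_neq0.
- have -> : back a 1 n - x0
           = ((convergent 1 n).1 - (convergent 1 n).2 * x 0) / (convergent 1 n).2.
    by rewrite back1 /=; field.
  rewrite normrM normfV mulrC norm_convergent_error.
  by under eq_bigr do rewrite add0n.
Qed.

End Convergents.

Lemma powers_vanish_lemma2p1_stmt (k : numFieldType) (conj : k -> k) :
  powers_vanish k -> lemma2p1_stmt conj.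
Proof.
move=> vanish Z subringZ discreteZ _ a x0 Za x_neq0 x_lt1 n.
apply: convergent_approximation => // z; exact: discrete_subring_small_eq0.
Qed.

Theorem lemma2p1 (R : realType) :
  lemma2p1_stmt (k := R) id /\ lemma2p1_stmt (k := R[i]) (fun z => z^*).
Proof.
split; apply: powers_vanish_lemma2p1_stmt;
  [exact: archi_powers_vanish | exact: complex_powers_vanish].
Qed.
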